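(* Let $m\ge1$ and let $W$ be a B-DMC. For every $n\ge1$, $$\sum_{\mathbf s\in\mathcal S_n}I(W_{\mathbf s})=\sum_{\mathbf s\in\mathcal S_{n-1}}I(W_{\mathbf s})+\sum_{\mathbf s\in\mathcal S_{n-m}}I(W_{\mathbf s}),$$ with the convention $\mathcal S_k=\{\emptyset\}$ (the empty string) for $k\le0$. Consequently $\frac{1}{N(n)}\sum_{\mathbf s\in\mathcal S_n}I(W_{\mathbf s})=I(W)$ for all $n\ge1$.
   Context: Fix an integer $m\ge1$. Define integers $N(n)$ by $N(n)=1$ for $1-m\le n\le 0$ and $N(n)=N(n-1)+N(n-m)$ for $n\ge1$; write $\mathbb N_n=\{1,\dots,N(n)\}$ (so $\mathbb N_n=\{1\}$ for $n\le 0$, and $\mathbb N_{n-m}\subseteq\mathbb N_{n-1}$). Define vectors $\mathbf s_n^{(i)}\in\{+,-,\bigstar\}^n$ for $n\ge0$, $i\in\mathbb N_n$, recursively: $\mathbf s_0^{(1)}$ is the empty vector, and for $n\ge1$: $\mathbf s_n^{(j)}=(\mathbf s_{n-1}^{(j)},+)$ and $\mathbf s_n^{(j+N(n-1))}=(\mathbf s_{n-1}^{(j)},-)$ for $j\in\mathbb N_{n-m}$, while $\mathbf s_n^{(j)}=(\mathbf s_{n-1}^{(j)},\bigstar)$ for $j\in\mathbb N_{n-1}\setminus\mathbb N_{n-m}$. Let $\mathcal S_n=\{\mathbf s_n^{(i)}:i\in\mathbb N_n\}$ for $n\ge1$. A B-DMC $V$ is a channel with input alphabet $\{0,1\}$,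 a finite output alphabet $\mathcal Y$ and transition probabilities $V(y|x)$. With base-2 logarithms and uniform input: $I(V)=\sum_{y}\sum_{x}\frac12V(y|x)\log\frac{V(y|x)}{\frac12V(y|0)+\frac12V(y|1)}$, $Z(V)=\sum_y\sqrt{V(y|0)V(y|1)}$, $J(V)=\log\frac{2}{1+Z(V)}$. For B-DMCs $V':\{0,1\}\to\mathcal Y_1$ and $V'':\{0,1\}\to\mathcal Y_2$ define $V'\boxminus V'':\{0,1\}\to\mathcal Y_1\times\mathcal Y_2$ by $(V'\boxminus V'')(y_1,y_2|x_1)=\sum_{x_2\in\{0,1\}}\frac12V'(y_1|x_1\oplus x_2)V''(y_2|x_2)$, and $V'\boxplus V'':\{0,1\}\to\mathcal Y_1\times\mathcal Y_2\times\{0,1\}$ by $(V'\boxplus V'')(y_1,y_2,x_1|x_2)=\frac12V'(y_1|x_1\oplus x_2)V''(y_2|x_2)$. Fix a B-DMC $W$. For every finite string $\mathbf t=(t_1,\dots,t_n)\in\{+,-,\bigstar\}^n$, $n\ge0$, define a B-DMC $W_{\mathbf t}$ recursively: $W_{\emptyset}=W$ for the empty string; for $n\ge1$ let $\mathbf t'=(t_1,\dots,t_{n-1})$ and $\mathbf t''=(t_1,\dots,t_{n-m})$ (the empty string if $n\le m$); then $W_{\mathbf t}=W_{\mathbf t''}\boxplus W_{\mathbf t'}$ if $t_n=+$, $W_{\mathbf t}=W_{\mathbf t''}\boxminus W_{\mathbf t'}$ if $t_n=-$, and $W_{\mathbf t}=W_{\mathbf t'}$ if $t_n=\bigstar$.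 *)

From mathcomp Require Import all_boot.
From Stdlib Require Import Reals.

Set Implicit Arguments.
Unset Strict Implicit.
Unset Printing Implicit Defensive.

Inductive sign := Plus | Minus | Star.

(* A binary-input channel: finite output alphabet [out] and transition
   probabilities [tr x y] = V(y|x). *)
Record chan := Chan { out : finType; tr : bool -> out -> R }.
Arguments tr : clear implicits.

Definition is_BDMC (V : chan) : Prop :=
  (forall x y, (0 <= tr V x y)%R) /\
  (forall x, \big[Rplus/0%R]_(y : out V) tr V x y = 1%R).

Definition log2 (x : R) : R := (ln x / ln 2)%R.

Definition Icap (V : chan) : R :=
  \big[Rplus/0%R]_(y : out V) \big[Rplus/0%R]_(x : bool)
    (if Req_EM_T (tr V x y) 0%R then 0%R
     else (/2 * tr V x y *
           log2 (tr V x y / (/2 * tr V false y + /2 * tr V true y)))%R).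

Definition box_minus (V' V'' : chan) : chan :=
  @Chan (out V' * out V'')%type
    (fun x1 y => \big[Rplus/0%R]_(x2 : bool)
        (/2 * tr V' (addb x1 x2) y.1 * tr V'' x2 y.2)%R).

Definition box_plus (V' V'' : chan) : chan :=
  @Chan (out V' * out V'' * bool)%type
    (fun x2 y => (/2 * tr V' (addb y.2 x2) y.1.1 * tr V'' x2 y.1.2)%R).

(* N(n); on nat, n - m is truncated, which matches N(k) = 1 for k <= 0.
   Nhist m n = [:: N n; N (n-1); ...; N 0]. *)
Fixpoint Nhist (m n : nat) : seq nat :=
  match n with
  | 0 => [:: 1]
  | n'.+1 => let h := Nhist m n' in (head 1 h + nth 1 h m.-1) :: h
  end.
(* nth 1 (Nhist m n') (m-1) = N(n'-(m-1)) = N(n-m) (default 1 when n - m < 0). *)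

Definition NN (m n : nat) : nat := head 1 (Nhist m n).

(* Shist m n = [:: S_n; S_(n-1); ...; S_0], each S_k listed as
   [:: s_k^(1); ...; s_k^(N k)]; vectors are written t_1..t_k (rcons appends). *)
Fixpoint Shist (m n : nat) : seq (seq (seq sign)) :=
  match n with
  | 0 => [:: [:: [::]]]
  | n'.+1 =>
      let h := Shist m n' in
      let prev := head [::] h in
      let k := NN m (n'.+1 - m) in
      ([seq rcons s Plus | s <- take k prev]
       ++ [seq rcons s Star | s <- drop k prev]
       ++ [seq rcons s Minus | s <- take k prev]) :: h
  end.

(* S_n (for n = 0 this is {empty string}; SS m (n - m) with truncated
   subtraction gives the convention S_k = {empty} for k <= 0). *)
Definition SS (m n : nat) : seq (seq sign) := head [::] (Shist m n).

(* W_t: Whist_rev m W r = [:: W_t; W_(t_1..t_(n-1)); ...; W_empty]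
   where r = rev t. *)
Fixpoint Whist_rev (m : nat) (W : chan) (r : seq sign) : seq chan :=
  match r with
  | [::] => [:: W]
  | a :: r' =>
      let h := Whist_rev m W r' in
      let W' := head W h in
      let W'' := nth W h m.-1 in      (* W_(t''), t'' = t_1..t_(n-m), empty if n <= m *)
      (match a with
       | Plus => box_plus W'' W'
       | Minus => box_minus W'' W'
       | Star => W'
       end) :: h
  end.

Definition Wt (m : nat) (W : chan) (t : seq sign) : chan :=
  head W (Whist_rev m W (rev t)).

Definition sumI (m : nat) (W : chan) (L : seq (seq sign)) : R :=
  \big[Rplus/0%R]_(s <- L) Icap (Wt m W s).

From mathcomp Require Import all_boot.
From Stdlib Require Import Reals Lra Lia.
From HB Require Import structures.
From mathcomp Require Import zify.

(** With [xlnx t = t ln t], the capacity of a channel [V] is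
    [1/(2 ln 2)] times the sum over outputs [y] of the Jensen gap
    [xlnx V(y|0) + xlnx V(y|1) - 2 xlnx ((V(y|0) + V(y|1))/2)].
    Expanding [xlnx] of the products that define the outputs of [V' ⊞ V'']
    and [V' ⊟ V''] shows that the gaps of the two new channels add up to
    those of [V'] and [V''], so [I(V' ⊞ V'') + I(V' ⊟ V'') = I(V') + I(V'')].
    In [S_n], the first [N(n-m)] words of [S_(n-1)] are extended by [+] and
    by [-], the others by [⋆]; truncated to length [n-m], those first words
    are exactly [S_(n-m)], which are the second channels of the transforms.
    Summing the conservation law over them gives the recursion, and
    induction with [N(n) = N(n-1) + N(n-m)] gives [∑ I = N(n) I(W)]. *)

Set Implicit Arguments.
Unset Strict Implicit.

Local Open Scope R_scope.

HB.instance Definition _ := Monoid.isComLaw.Build R 0 Rplus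
  (fun x y z => esym (Rplus_assoc x y z)) Rplus_comm Rplus_0_l.
HB.instance Definition _ := Monoid.isMulLaw.Build R 0 Rmult Rmult_0_l Rmult_0_r.
HB.instance Definition _ := Monoid.isAddLaw.Build R Rmult Rplus
  Rmult_plus_distr_r Rmult_plus_distr_l.

Lemma big_pair (A B : finType) (F : A * B -> R) :
  \big[Rplus/0]_(y : A * B) F y = \big[Rplus/0]_(a : A) \big[Rplus/0]_(b : B) F (a, b).
Proof. by rewrite pair_big; apply: eq_bigr => -[]. Qed.

Definition xlnx (t : R) := t * ln t.
Definition jensen_gap p q := xlnx p + xlnx q - 2 * xlnx ((p + q) / 2).

Lemma xlnxM x y : 0 <= x -> 0 <= y -> xlnx (x * y) = xlnx x * y + x * xlnx y.
Proof.
rewrite /xlnx => /Rle_lt_or_eq_dec[x_gt0|<-] /Rle_lt_or_eq_dec[y_gt0|<-];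
  try ring.
by rewrite ln_mult //; ring.
Qed.

(* With [a_x = V'(y1|x)] and [b_x = V''(y2|x)], the left side collects the
   gaps of [V' ⊞ V''] at [(y1, y2, true)], [(y1, y2, false)] and of
   [V' ⊟ V''] at [(y1, y2)]. *)
Lemma jensen_gap_combine a0 a1 b0 b1 :
  0 <= a0 -> 0 <= a1 -> 0 <= b0 -> 0 <= b1 ->
  jensen_gap (/2 * a1 * b0) (/2 * a0 * b1) + jensen_gap (/2 * a0 * b0) (/2 * a1 * b1)
  + jensen_gap (/2 * a1 * b1 + /2 * a0 * b0) (/2 * a0 * b1 + /2 * a1 * b0)
  = jensen_gap a0 a1 * ((b0 + b1) / 2) + (a0 + a1) / 2 * jensen_gap b0 b1.
Proof.
move=> a0_ge0 a1_ge0 b0_ge0 b1_ge0.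
have half_ge0 : 0 <= /2 by lra.
have xlnx_half x : 0 <= x -> xlnx (x / 2) = xlnx (/2) * x + /2 * xlnx x.
  by move=> x_ge0; rewrite /Rdiv xlnxM //; ring.
have xlnx_prod a b : 0 <= a -> 0 <= b ->
    xlnx (/2 * a * b) = xlnx (/2) * a * b + /2 * (xlnx a * b + a * xlnx b).
  move=> a_ge0 b_ge0.
  by rewrite xlnxM ?xlnxM //; [ring | apply: Rmult_le_pos].
have prod_ge0 a b : 0 <= a -> 0 <= b -> 0 <= /2 * a * b.
  by move=> *; do 2![apply: Rmult_le_pos => //].
rewrite /jensen_gap.
have -> : (/2 * a1 * b1 + /2 * a0 * b0 + (/2 * a0 * b1 + /2 * a1 * b0)) / 2
          = (a0 + a1) / 2 * ((b0 + b1) / 2) by field.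
rewrite (Rplus_comm (/2 * a1 * b0)) (Rplus_comm (/2 * a0 * b0)) !xlnx_prod //.
rewrite xlnxM ?xlnx_half; first field.
all: first [lra | by apply: Rplus_le_le_0_compat; apply: prod_ge0].
Qed.

Definition gap_sum (V : chan) : R :=
  \big[Rplus/0]_(y : out V) jensen_gap (tr V false y) (tr V true y).

Lemma ln2_gt0 : 0 < ln 2.
Proof. by rewrite -ln_1; apply: ln_increasing; lra. Qed.

Lemma Icap_term t q : 0 <= t -> (t <> 0 -> 0 < q) ->
  (if Req_EM_T t 0 then 0 else /2 * t * log2 (t / q))
  = (xlnx t - t * ln q) / (2 * ln 2).
Proof.
move=> t_ge0 q_gt0; have := ln2_gt0.
case: Req_EM_T => [t0|t_neq0] /= ln2_gt0; first by rewrite t0 /xlnx; field; lra.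
have t_gt0 : 0 < t by case: (Rle_lt_or_eq_dec _ _ t_ge0) => // /esym.
have {}q_gt0 := q_gt0 t_neq0.
rewrite /log2 /Rdiv ln_mult ?ln_Rinv //; last exact: Rinv_0_lt_compat.
by rewrite /xlnx; field; lra.
Qed.

Lemma Icap_gap_sum V : (forall x y, 0 <= tr V x y) -> Icap V = gap_sum V / (2 * ln 2).
Proof.
move=> tr_ge0; rewrite /Icap /gap_sum /Rdiv big_distrl /=; apply: eq_bigr => y _.
have t0_ge0 := tr_ge0 false y; have t1_ge0 := tr_ge0 true y; have := ln2_gt0.
set q := /2 * tr V false y + /2 * tr V true y.
have q_gt0 x : tr V x y <> 0 -> 0 < q.
  by move/Rdichotomy; case: x => /= -[]; rewrite /q; lra.
rewrite big_bool /= (Icap_term t1_ge0 (q_gt0 true)) (Icap_term t0_ge0 (q_gt0 false)).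
have -> : q = (tr V false y + tr V true y) / 2 by rewrite /q; field.
by move=> ln2_gt0; rewrite /jensen_gap /xlnx; field; lra.
Qed.

Lemma mean_output_sum V : is_BDMC V ->
  \big[Rplus/0]_(y : out V) ((tr V false y + tr V true y) / 2) = 1.
Proof.
by case=> _ tr_sum1; rewrite /Rdiv -big_distrl big_split /= !tr_sum1; field.
Qed.

Lemma is_BDMC_box_plus V' V'' : is_BDMC V' -> is_BDMC V'' -> is_BDMC (box_plus V' V'').
Proof.
move=> BV' BV''; have [tr'_ge0 _] := BV'; have [tr''_ge0 tr''_sum1] := BV''.
split=> [x [[a b] u] /=|x]; first by do 2![apply: Rmult_le_pos => //]; lra.
rewrite !big_pair -(mean_output_sum BV'); apply: eq_bigr => a _.
under eq_bigr => b _ do rewrite big_bool /= -Rmult_plus_distr_r.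
by rewrite -big_distrr /= tr''_sum1; case: x => /=; field.
Qed.

Lemma is_BDMC_box_minus V' V'' : is_BDMC V' -> is_BDMC V'' -> is_BDMC (box_minus V' V'').
Proof.
move=> BV' BV''; have [tr'_ge0 _] := BV'; have [tr''_ge0 tr''_sum1] := BV''.
split=> [x [a b] /=|x].
  by rewrite big_bool; apply: Rplus_le_le_0_compat; do 2![apply: Rmult_le_pos => //]; lra.
rewrite big_pair -(mean_output_sum BV'); apply: eq_bigr => a _.
under eq_bigr => b _ do rewrite /= big_bool.
rewrite big_split /= -!big_distrr /= !tr''_sum1.
by case: x => /=; field.
Qed.

Lemma gap_sum_box_plus_minus V' V'' : is_BDMC V' -> is_BDMC V'' ->
  gap_sum (box_plus V' V'') + gap_sum (box_minus V' V'') = gap_sum V' + gap_sum V''.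
Proof.
move=> BV' BV''; have [tr'_ge0 _] := BV'; have [tr''_ge0 _] := BV''.
rewrite /gap_sum !big_pair -big_split /=.
under eq_bigr => a _.
  rewrite -big_split /=.
  under eq_bigr => b _ do
    rewrite big_bool /= !big_bool /= jensen_gap_combine //.
  rewrite big_split /= -!big_distrr /= (mean_output_sum BV'') Rmult_1_r.
  over.
by rewrite big_split /= -big_distrl /= (mean_output_sum BV') Rmult_1_l.
Qed.

Lemma Icap_box_plus_minus V' V'' : is_BDMC V' -> is_BDMC V'' ->
  Icap (box_plus V' V'') + Icap (box_minus V' V'') = Icap V' + Icap V''.
Proof.
move=> BV' BV''.
have [tr_plus_ge0 _] := is_BDMC_box_plus BV' BV''.
have [tr_minus_ge0 _] := is_BDMC_box_minus BV' BV''.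
have [[tr'_ge0 _] [tr''_ge0 _]] := (BV', BV'').
rewrite !Icap_gap_sum // /Rdiv -!Rmult_plus_distr_r gap_sum_box_plus_minus //.
Qed.

Close Scope R_scope.

Lemma sign_eq_dec : comparable sign.
Proof. by move=> a b; rewrite /decidable; decide equality. Qed.

HB.instance Definition _ := comparableMixin sign_eq_dec.

Lemma nth_Nhist m n i : nth 1 (Nhist m n) i = NN m (n - i).
Proof. by elim: n i => [|n IHn] [|i] //=; rewrite nth_nil. Qed.

Lemma NN_succ m n : 0 < m -> NN m n.+1 = NN m n + NN m (n.+1 - m).
Proof. by case: m => // m _; rewrite /NN /= nth_Nhist subSS. Qed.

Lemma NN_homo m : {homo NN m : k n / k <= n}.
Proof.
apply: homo_leq => [//|k n p|n]; first exact: leq_trans.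
by rewrite {2}/NN /= leq_addr.
Qed.

Lemma NN_gt0 m n : 0 < NN m n.
Proof. exact: (NN_homo m (leq0n n)). Qed.

Lemma SS_succ m n : SS m n.+1 =
  let K := NN m (n.+1 - m) in
  [seq rcons s Plus | s <- take K (SS m n)]
  ++ [seq rcons s Star | s <- drop K (SS m n)]
  ++ [seq rcons s Minus | s <- take K (SS m n)].
Proof. by []. Qed.

Lemma size_SS_mem m n s : s \in SS m n -> size s = n.
Proof.
elim: n s => [|n IHn] s; first by rewrite inE => /eqP ->.
rewrite SS_succ /= !mem_cat => /or3P[] /mapP[t t_in ->]; rewrite size_rcons IHn //.
- exact: mem_take t_in.
- exact: mem_drop t_in.
- exact: mem_take t_in.
Qed.

Lemma size_SS m n : 0 < m -> size (SS m n) = NN m n.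
Proof.
move=> m_gt0; elim: n => [//|n IHn].
have K_le : NN m (n.+1 - m) <= size (SS m n) by rewrite IHn NN_homo //; lia.
rewrite SS_succ /= !size_cat !size_map size_drop size_takel // NN_succ //.
by move: K_le; rewrite IHn; lia.
Qed.

Lemma map_take_SS m k n : 0 < m -> k <= n ->
  [seq take k s | s <- take (NN m k) (SS m n)] = SS m k.
Proof.
move=> m_gt0; elim: n => [|n IHn] k_le.
  by move: k_le; rewrite leqn0 => /eqP ->.
case: (ltngtP k n.+1) k_le => [k_lt _|//|-> _]; last first.
  rewrite take_oversize ?size_SS //.
  by apply: map_id_in => s /size_SS_mem <-; rewrite take_size.
have take_rcons a L : {subset L <= SS m n} ->
    [seq take k s | s <- [seq rcons s a | s <- L]] = [seq take k s | s <- L].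
  move=> L_sub; rewrite -map_comp; apply/eq_in_map => s /L_sub /size_SS_mem size_s /=.
  by rewrite -cats1 takel_cat // size_s.
set K := NN m (n.+1 - m).
rewrite SS_succ /= catA takel_cat; last first.
  by rewrite size_cat !size_map -size_cat cat_take_drop size_SS // NN_homo.
rewrite map_take map_cat !take_rcons => [|s|s]; last exact: mem_take; last exact: mem_drop.
by rewrite -map_cat cat_take_drop -map_take IHn // -ltnS.
Qed.

Lemma nth_Whist_rev m W s i :
  nth W (Whist_rev m W (rev s)) i = Wt m W (take (size s - i) s).
Proof.
elim/last_ind: s i => [|s a IHs] [|i] /=; rewrite ?nth_nil //.
  by rewrite subn0 take_size.
by rewrite rev_rcons /= IHs size_rcons subSS -cats1 takel_cat // leq_subr.
Qed.

Lemma Wt_rcons m W s a : Wt m W (rcons s a) =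
  let W' := Wt m W s in
  let W'' := Wt m W (take (size s - m.-1) s) in
  match a with
  | Plus => box_plus W'' W'
  | Minus => box_minus W'' W'
  | Star => W'
  end.
Proof. by rewrite {1}/Wt rev_rcons /= nth_Whist_rev. Qed.

Lemma is_BDMC_Whist_rev m W r i : is_BDMC W -> is_BDMC (nth W (Whist_rev m W r) i).
Proof.
move=> BW; elim: r i => [|a r IHr] [|i] /=; rewrite ?nth_nil //.
have := IHr 0; have := IHr m.-1; rewrite nth0; case: a => BW'' BW'.
- exact: is_BDMC_box_plus.
- exact: is_BDMC_box_minus.
- exact: BW'.
Qed.

Lemma is_BDMC_Wt m W s : is_BDMC W -> is_BDMC (Wt m W s).
Proof. by rewrite /Wt -nth0; apply: is_BDMC_Whist_rev. Qed.

Local Open Scope R_scope.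

Lemma sumI_cat m W L1 L2 : sumI m W (L1 ++ L2) = sumI m W L1 + sumI m W L2.
Proof. exact: big_cat. Qed.

Lemma sumI_rcons_Star m W L : sumI m W [seq rcons s Star | s <- L] = sumI m W L.
Proof. by rewrite /sumI big_map; apply: eq_bigr => s _; rewrite Wt_rcons. Qed.

Lemma sumI_rcons_Plus_Minus m W (n : nat) (L : seq (seq sign)) : is_BDMC W ->
  {in L, forall s, size s = n} ->
  sumI m W [seq rcons s Plus | s <- L] + sumI m W [seq rcons s Minus | s <- L]
  = sumI m W [seq take (n - m.-1)%nat s | s <- L] + sumI m W L.
Proof.
move=> BW size_L; rewrite /sumI !big_map -!big_split /=.
apply: eq_big_seq => s /size_L size_s; rewrite !Wt_rcons /= size_s.
by apply: Icap_box_plus_minus; apply: is_BDMC_Wt.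
Qed.

Lemma sumI_SS_succ m W n : (0 < m)%nat -> is_BDMC W ->
  sumI m W (SS m n.+1) = sumI m W (SS m n) + sumI m W (SS m (n.+1 - m)).
Proof.
move=> m_gt0 BW; set K := NN m (n.+1 - m).
have size_take : {in take K (SS m n), forall s, size s = n}.
  by move=> s /mem_take; apply: size_SS_mem.
have := sumI_rcons_Plus_Minus m BW size_take.
have -> : (n - m.-1 = n.+1 - m)%nat by lia.
rewrite map_take_SS //; last by lia.
have split_SS : sumI m W (SS m n) = sumI m W (take K (SS m n)) + sumI m W (drop K (SS m n)).
  by rewrite -sumI_cat cat_take_drop.
rewrite SS_succ /= -/K !sumI_cat sumI_rcons_Star split_SS; lra.
Qed.

Lemma sumI_SS m W n : (0 < m)%nat -> is_BDMC W ->
  sumI m W (SS m n) = INR (NN m n) * Icap W.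
Proof.
move=> m_gt0 BW; elim/ltn_ind: n => -[_|n IHn].
  by rewrite /sumI /= big_seq1 Rmult_1_l.
rewrite sumI_SS_succ // NN_succ // plus_INR !IHn //; first ring.
by lia.
Qed.

Close Scope R_scope.

Theorem mainTheorem11 (m : nat) (W : chan) :
  (1 <= m)%N -> is_BDMC W ->
  forall n : nat, (1 <= n)%N ->
    sumI m W (SS m n) = (sumI m W (SS m (n - 1)) + sumI m W (SS m (n - m)))%R
    /\ (/ INR (NN m n) * sumI m W (SS m n) = Icap W)%R.
Proof.
move=> m_gt0 BW [//|n] _; split.
  by rewrite subn1; exact: sumI_SS_succ.
rewrite sumI_SS //; field; apply: not_0_INR; have := NN_gt0 m n.+1; lia.
Qed.
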